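(* Let $V\subseteq\mathcal V$ be finite, $\mathcal E\in\mathit{DProg}(V)$, $W\subseteq\mathcal V$ finite and $P,Q$ projectors on $\mathcal H_W$. Then: (1) $sp^p.\mathcal E.(wlp^p.\mathcal E.Q)\sqsubseteq Q$ and $P\sqsubseteq wlp^p.\mathcal E.(sp^p.\mathcal E.P)$; (2) $wp^p.\mathcal E.Q=wlp^p.\mathcal E.Q\wedge wp^p.\mathcal E.I_W$; (3) $sp^p.\mathcal E.(wp^p.\mathcal E.Q)\sqsubseteq Q$, and if $P\sqsubseteq wp^p.\mathcal E.I_W$ then $P\sqsubseteq wp^p.\mathcal E.(sp^p.\mathcal E.P)$.
   Context: $\mathcal V$ is a countably infinite set of qubit variables; $\mathcal H_V=\bigotimes_{q\in V}\mathcal H_q$. $\mathcal D(\mathcal H)$: partial density operators; projectors are identified with their image subspaces, ordered by inclusion $\sqsubseteq$, with $\wedge$ = intersection. $\mathit{DProg}(V)$: completely positive trace-nonincreasing super-operators on $\mathcal L(\mathcal H_V)$. Convention: operators and super-operators are implicitly extended to $\mathcal H_{V\cup W}$ (and larger systems) by tensoring with identities; all projectors are regarded on $\mathcal H_{V\cup W}$. For projectors $P,Q$: $\mathcal E\models_{tot}(P,Q)$ iff for all finite $X\supseteq V\cup W$ and $\rho\in\mathcal D(\mathcal H_X)$, ${\rm tr}(P\rho)\le{\rm tr}(Q\mathcal E(\rho))$; $\mathcal E\models_{par}(P,Q)$ iff for all such $X,\rho$, ${\rm tr}(P\rho)\le{\rm tr}(Q\mathcal E(\rho))+{\rm tr}(\rho)-{\rm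 tr}(\mathcal E(\rho))$. $wp^p.\mathcal E.Q$ is the largest projector $P$ with $\mathcal E\models_{tot}(P,Q)$; $wlp^p.\mathcal E.Q$ the largest projector $P$ with $\mathcal E\models_{par}(P,Q)$; $sp^p.\mathcal E.Q$ the smallest projector $R$ with $\mathcal E\models_{par}(Q,R)$. *)

From HB Require Import structures.
From mathcomp Require Import all_boot all_order all_algebra.
From mathcomp Require Import finmap.
From mathcomp Require Import complex.
From mathcomp Require Import reals.
From Stdlib Require Import ClassicalEpsilon.

Set Implicit Arguments.
Unset Strict Implicit.
Unset Printing Implicit Defensive.

Import Order.TTheory GRing.Theory Num.Theory.
Local Open Scope fset_scope.
Local Open Scope ring_scope.

Section Quantum.
Variable R : realType.
Notation C := R[i].

(* Qubit variables are natural numbers; a finite set of variables X : {fset nat}.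
   The computational basis of H_X = (C^2)^{(x) X} is indexed by assignments X -> bool. *)
Definition basis (X : {fset nat}) := {ffun X -> bool}.

Definition op (X : {fset nat}) := basis X -> basis X -> C.

Definition tr X (A : op X) : C := \sum_(a : basis X) A a a.
Definition mul X (A B : op X) : op X := fun a b => \sum_(c : basis X) A a c * B c b.
Definition app X (A : op X) (v : basis X -> C) : basis X -> C :=
  fun a => \sum_(b : basis X) A a b * v b.
Definition idop X : op X := fun a b => if a == b then 1 else 0.

Definition psd X (A : op X) : Prop :=
  forall v : basis X -> C, 0 <= \sum_(a : basis X) \sum_(b : basis X) (v a)^* * A a b * v b.
Definition pdo X (A : op X) : Prop := psd A /\ tr A <= 1.
Definition projector X (P : op X) : Prop :=
  (forall a b, P a b = (P b a)^*) /\ (forall a b, mul P P a b = P a b).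
Definition inrange X (P : op X) (v : basis X -> C) : Prop :=
  exists w : basis X -> C, forall a, v a = app P w a.

(* restriction of an assignment on T to S (meaningful when S is a subset of T) *)
Definition restr (S T : {fset nat}) (a : basis T) : basis S :=
  [ffun s : S => if (insub (fsval s) : option T) is Some t then a t else false].
Definition glue (S T : {fset nat}) (u : basis S) (a : basis T) : basis T :=
  [ffun t : T => if (insub (fsval t) : option S) is Some s then u s else a t].
Definition agree_out (S T : {fset nat}) (a b : basis T) : bool :=
  [forall t : T, (fsval t \notin S) ==> (a t == b t)].

(* implicit extension A (x) I of an operator on H_S to H_T (for S a subset of T) *)
Definition extO (S T : {fset nat}) (A : op S) : op T :=
  fun a b => if agree_out S a b then A (restr S a) (restr S b) else 0.

(* super-operators on L(H_V) and their implicit extension E (x) id to H_X *)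
Definition superop (V : {fset nat}) := op V -> op V.
Definition extS (V X : {fset nat}) (E : superop V) (rho : op X) : op X :=
  fun a b => E (fun u v => rho (glue u a) (glue v b)) (restr V a) (restr V b).

(* DProg(V): completely positive, trace-nonincreasing super-operators.
   Complete positivity is expressed as positivity of E (x) id on every
   H_X with X a finite superset of V (qubit ancillas). *)
Definition DProg (V : {fset nat}) (E : superop V) : Prop :=
  [/\ (forall (c : C) (A B : op V) a b,
         E (fun i j => c * A i j + B i j) a b = c * E A a b + E B a b),
      (forall X : {fset nat}, (V `<=` X)%fset -> forall rho : op X, psd rho -> psd (extS E rho))
    & (forall rho : op V, psd rho -> tr (E rho) <= tr rho)].

(* correctness formulas; all operators are regarded on a common finite X
   containing V and the spaces of the pre- and postcondition *)
Definition sat_tot (V S T : {fset nat}) (E : superop V) (P : op S) (Q : op T) : Prop :=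
  forall X : {fset nat}, (V `|` S `|` T `<=` X)%fset -> forall rho : op X, pdo rho ->
    tr (mul (@extO S X P) rho) <= tr (mul (@extO T X Q) (@extS V X E rho)).

Definition sat_par (V S T : {fset nat}) (E : superop V) (P : op S) (Q : op T) : Prop :=
  forall X : {fset nat}, (V `|` S `|` T `<=` X)%fset -> forall rho : op X, pdo rho ->
    tr (mul (@extO S X P) rho)
      <= tr (mul (@extO T X Q) (@extS V X E rho)) + tr rho - tr (@extS V X E rho).

(* projectors are identified with their image subspaces; the order is inclusion,
   comparing projectors on different spaces after extending both to S `|` T *)
Definition sqle (S T : {fset nat}) (A : op S) (B : op T) : Prop :=
  forall v : basis (S `|` T)%fset -> C,
    inrange (@extO S (S `|` T)%fset A) v -> inrange (@extO T (S `|` T)%fset B) v.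

Definition zeroop X : op X := fun _ _ => 0.

Definition wp (V W : {fset nat}) (E : superop V) (Q : op W) : op (V `|` W)%fset :=
  epsilon (inhabits (@zeroop (V `|` W)%fset))
    (fun P => projector P /\ sat_tot E P Q /\
       forall P' : op (V `|` W)%fset, projector P' -> sat_tot E P' Q -> sqle P' P).

Definition wlp (V W : {fset nat}) (E : superop V) (Q : op W) : op (V `|` W)%fset :=
  epsilon (inhabits (@zeroop (V `|` W)%fset))
    (fun P => projector P /\ sat_par E P Q /\
       forall P' : op (V `|` W)%fset, projector P' -> sat_par E P' Q -> sqle P' P).

Definition sp (V W : {fset nat}) (E : superop V) (Q : op W) : op (V `|` W)%fset :=
  epsilon (inhabits (@zeroop (V `|` W)%fset))
    (fun R' => projector R' /\ sat_par E Q R' /\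
       forall R'' : op (V `|` W)%fset, projector R'' -> sat_par E Q R'' -> sqle R' R'').

End Quantum.

From mathcomp Require Import all_boot all_order all_algebra.
From mathcomp Require Import finmap complex reals ring.
From Stdlib Require Import Classical FunctionalExtensionality ClassicalEpsilon.

(* For a projector [Q] and a trace-nonincreasing completely positive [E],
   the total and partial defects [tr rho - tr (Q E(rho))] and
   [tr E(rho) - tr (Q E(rho))] are linear in [rho], nonnegative and bounded by
   [tr rho] on positive operators.  Such a functional is [rho |-> tr (rho G)] for
   a positive [G], and [E |= (P, Q)] holds iff it vanishes on the pure states of
   [range P], i.e. iff [range P] lies in the kernel of [G].  So [wp.E.Q] and
   [wlp.E.Q] are the projectors onto these kernels, while [sp.E.P] is the
   complement of the vectors annihilated by every [E(|v><v|)], [v] in [range P].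
   (2) is the decomposition of the total defect as the partial defect plus the
   trace lost by [E] (the total defect for [I]), both nonnegative.  (1) says that
   [sp] and [wlp] form a Galois connection; (3) follows in the same way, using
   that total correctness implies partial correctness and, for its second half,
   the decomposition of (2).  Satisfaction on any
   larger space reduces to the space [V u S u T] of the formula by splitting
   [rho] into diagonal blocks. *)

Set Implicit Arguments.
Unset Strict Implicit.
Unset Printing Implicit Defensive.

Import Order.TTheory GRing.Theory Num.Theory.
Local Open Scope fset_scope.
Local Open Scope ring_scope.

Local Notation EO T A := (@extO _ _ T A).

Ltac fsubset_tac := let x := fresh "x" in apply/fsubsetP => x; rewrite ?in_fsetU;
  repeat match goal with |- context [x \in ?A] => case: (x \in A) end; by [].
Ltac fset_eq_tac := apply/eqP; rewrite eqEfsubset; apply/andP; split; fsubset_tac.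

Section Assignments.

Lemma insub_mem (T : {fset nat}) x (h : x \in T) : (insub x : option T) = Some [` h].
Proof. case: insubP => [t _ e|]; last by rewrite h. by congr Some; apply: val_inj. Qed.

Lemma insub_nmem (T : {fset nat}) x (h : x \notin T) : (insub x : option T) = None.
Proof. case: insubP => [t Ht e|//]. by rewrite -e fsvalP in h. Qed.

Ltac case_insub S t :=
  let h := fresh "h" in
  case: (boolP (fsval t \in S)) => h;
  [rewrite ?(insub_mem h) | rewrite ?(insub_nmem h)].

Lemma restr_glue (S T : {fset nat}) (u : basis S) (a : basis T) :
  S `<=` T -> restr S (glue u a) = u.
Proof.
move=> ST; apply/ffunP => s; rewrite !ffunE.
rewrite (insub_mem (fsubsetP ST _ (fsvalP s))) ffunE /= (insub_mem (fsvalP s)).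
by congr (u _); apply: val_inj.
Qed.

Lemma glue_restr (S T : {fset nat}) (a : basis T) : glue (restr S a) a = a.
Proof.
apply/ffunP => t; rewrite !ffunE.
case_insub S t => //; rewrite ffunE /= (insub_mem (fsvalP t)).
by congr (a _); apply: val_inj.
Qed.

Lemma glue_glue (S T : {fset nat}) (u v : basis S) (a : basis T) :
  glue u (glue v a) = glue u a.
Proof. apply/ffunP => t; rewrite !ffunE; case_insub S t => //; by rewrite ffunE (insub_nmem h). Qed.

Lemma glue_full (S : {fset nat}) (u a : basis S) : glue u a = u.
Proof.
apply/ffunP => t; rewrite !ffunE (insub_mem (fsvalP t)).
by congr (u _); apply: val_inj.
Qed.

Lemma restr_full (S : {fset nat}) (a : basis S) : restr S a = a.
Proof. by have := glue_restr S a; rewrite glue_full. Qed.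

Lemma glueA (V Z X : {fset nat}) (u : basis V) (a : basis Z) (c : basis X) :
  V `<=` Z -> glue u (glue a c) = glue (glue u a) c.
Proof.
move=> VZ; apply/ffunP => t; rewrite !ffunE.
case_insub V t.
  rewrite (insub_mem (fsubsetP VZ _ h)) ffunE /= (insub_mem h).
  by congr (u _); apply: val_inj.
case_insub Z t => //.
by rewrite ffunE /= (insub_nmem h).
Qed.

Lemma restr_glue_sub (S Z X : {fset nat}) (a : basis Z) (c : basis X) :
  S `<=` Z -> Z `<=` X -> restr S (glue a c) = restr S a.
Proof.
move=> SZ ZX; apply/ffunP => s; rewrite !ffunE.
have sZ : fsval s \in Z := fsubsetP SZ _ (fsvalP s).
by rewrite (insub_mem (fsubsetP ZX _ sZ)) (insub_mem sZ) /= ffunE (insub_mem sZ).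
Qed.

Lemma restr_restr (S S' X : {fset nat}) (a : basis X) :
  S `<=` S' -> S' `<=` X -> restr S (restr S' a) = restr S a.
Proof.
move=> SS' S'X; apply/ffunP => s; rewrite !ffunE.
have sS' : fsval s \in S' := fsubsetP SS' _ (fsvalP s).
have sX : fsval s \in X := fsubsetP S'X _ sS'.
by rewrite (insub_mem sS') (insub_mem sX) /= ffunE (insub_mem sX).
Qed.

(* Assignments agreeing outside [Z] have the same [reset Z], which thus indexes
   the [Z]-blocks of [basis X]. *)
Definition reset (Z X : {fset nat}) (a : basis X) : basis X :=
  glue ([ffun _ => false] : basis Z) a.

Lemma reset_glue (Z X : {fset nat}) (a : basis Z) (c : basis X) :
  reset Z (glue a c) = reset Z c.
Proof. exact: glue_glue. Qed.

Lemma reset_idem (Z X : {fset nat}) (c : basis X) : reset Z (reset Z c) = reset Z c.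
Proof. exact: reset_glue. Qed.

Lemma glue_restr_reset (Z X : {fset nat}) (a : basis X) :
  glue (restr Z a) (reset Z a) = a.
Proof. by rewrite /reset glue_glue glue_restr. Qed.

Lemma reset_mem (Z X : {fset nat}) (c : basis X) t :
  reset Z c = c -> fsval t \in Z -> c t = false.
Proof. by move=> <- h; rewrite ffunE (insub_mem h) ffunE. Qed.

Lemma glue_eq (S X : {fset nat}) (a b : basis S) (k k' : basis X) : S `<=` X ->
  reset S k = k -> reset S k' = k' ->
  (glue a k == glue b k') = (k == k') && (a == b).
Proof.
move=> SX hk hk'; apply/idP/idP; last by case/andP => /eqP -> /eqP ->.
move/eqP => e; apply/andP; split; apply/eqP.
  by rewrite -hk -hk' -(reset_glue a) -(reset_glue b k') e.
by rewrite -(restr_glue a k SX) -(restr_glue b k' SX) e.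
Qed.

Lemma agree_out_glue (S Z X : {fset nat}) (a b : basis Z) (c c' : basis X) :
  S `<=` Z -> Z `<=` X -> reset Z c = c -> reset Z c' = c' ->
  agree_out S (glue a c) (glue b c') = (c == c') && agree_out S a b.
Proof.
move=> SZ ZX hc hc'; apply/idP/idP.
- move=> /forallP H; apply/andP; split.
    apply/eqP/ffunP => t; case: (boolP (fsval t \in Z)) => h.
      by rewrite (reset_mem hc h) (reset_mem hc' h).
    have hS : fsval t \notin S by apply: contra h; apply: (fsubsetP SZ).
    by have := H t; rewrite hS /= !ffunE (insub_nmem h) => /eqP.
  apply/forallP => t; apply/implyP => hS.
  have tX : fsval t \in X := fsubsetP ZX _ (fsvalP t).
  have := H [` tX]; rewrite /= hS /= !ffunE (insub_mem (fsvalP t)).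
  by have -> : [` fsvalP t] = t by apply: val_inj.
- case/andP => /eqP <- /forallP H; apply/forallP => t; apply/implyP => hS.
  rewrite !ffunE; case: (boolP (fsval t \in Z)) => h; last by rewrite (insub_nmem h).
  by rewrite (insub_mem h); have := H [` h]; rewrite /= hS.
Qed.

Lemma agree_outC (S X : {fset nat}) (a b : basis X) : agree_out S a b = agree_out S b a.
Proof. by apply/idP/idP => /forallP H; apply/forallP => t; rewrite eq_sym; apply: H. Qed.

Lemma sum_basis_split (M : nmodType) (Z X : {fset nat}) (F : basis X -> M) :
  Z `<=` X ->
  \sum_(a : basis X) F a =
    \sum_(c : basis X | reset Z c == c) \sum_(a' : basis Z) F (glue a' c).
Proof.
move=> ZX.
rewrite (partition_big (fun a => reset Z a) (fun c => reset Z c == c)) /=; last first.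
  by move=> a _; rewrite reset_idem.
apply: eq_bigr => c /eqP hc.
rewrite (reindex_onto (fun a' => glue a' c) (fun a => restr Z a)) /=; last first.
  by move=> a /eqP <-; rewrite glue_restr_reset.
apply: eq_bigl => a'.
by rewrite reset_glue hc eqxx restr_glue // eqxx.
Qed.

Lemma sum_basis_block (M : nmodType) (Z X : {fset nat}) (c : basis X) (F : basis X -> M) :
  Z `<=` X -> reset Z c = c -> (forall a, reset Z a != c -> F a = 0) ->
  \sum_a F a = \sum_(a' : basis Z) F (glue a' c).
Proof.
move=> ZX hc HF; rewrite (sum_basis_split _ ZX) (bigD1 c) /=; last by rewrite hc.
rewrite [X in _ + X]big1 ?addr0 // => k /andP[/eqP hk hkc].
by apply: big1 => a' _; apply: HF; rewrite reset_glue hk.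
Qed.

End Assignments.

Section Operators.
Variable R : realType.
Local Notation C := R[i].
Variable X : {fset nat}.
Local Notation B := (basis X).
Local Notation OP := (op R X).
Implicit Types (A G M P : OP) (u v w : B -> C).

Definition ket (c : B) : B -> C := fun x => (x == c)%:R.
Definition dot u v : C := \sum_a (u a)^* * v a.
Definition outer u w : OP := fun a b => u a * (w b)^*.
Definition qform A v : C := \sum_a \sum_b (v a)^* * A a b * v b.
Definition sesq A u w : C := \sum_a \sum_b (u a)^* * A a b * w b.
Definition subop A A' : OP := fun a b => A a b - A' a b.
Definition hermitian A := forall a b, A a b = (A b a)^*.
Definition complop P : OP := subop (@idop R X) P.

Lemma op_ext A A' : (forall a b, A a b = A' a b) -> A = A'.
Proof.
move=> h; apply: functional_extensionality => a.
by apply: functional_extensionality => b; exact: h.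
Qed.

Lemma mulopA A A' A'' : mul A (mul A' A'') = mul (mul A A') A''.
Proof.
apply: op_ext => a b; rewrite /mul.
under eq_bigr => c _ do rewrite big_distrr /=.
rewrite exchange_big /=; apply: eq_bigr => d _.
by rewrite big_distrl /=; apply: eq_bigr => c _; rewrite mulrA.
Qed.

Lemma tr_mulC A A' : tr (mul A A') = tr (mul A' A).
Proof.
rewrite /tr /mul exchange_big /=; apply: eq_bigr => a _; apply: eq_bigr => b _.
by rewrite mulrC.
Qed.

Lemma sum_mul_ket (F : B -> C) c : \sum_b F b * ket c b = F c.
Proof.
rewrite (bigD1 c) //= /ket eqxx mulr1 big1 ?addr0 // => b /negbTE ->.
by rewrite mulr0.
Qed.

Lemma sum_ket_mul (F : B -> C) c : \sum_b (ket c b)^* * F b = F c.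
Proof.
rewrite (bigD1 c) //= /ket eqxx conjC1 mul1r big1 ?addr0 // => b /negbTE ->.
by rewrite conjC0 mul0r.
Qed.

Lemma mul1op A : mul (@idop R X) A = A.
Proof.
apply: op_ext => a b; rewrite /mul /idop (bigD1 a) //= eqxx mul1r big1 ?addr0 //.
by move=> c /negbTE; rewrite eq_sym => ->; rewrite mul0r.
Qed.

Lemma mulop1 A : mul A (@idop R X) = A.
Proof.
apply: op_ext => a b; rewrite /mul /idop (bigD1 b) //= eqxx mulr1 big1 ?addr0 //.
by move=> c /negbTE ->; rewrite mulr0.
Qed.

Lemma app1op v : app (@idop R X) v = v.
Proof.
apply: functional_extensionality => a; rewrite /app /idop (bigD1 a) //= eqxx mul1r.
by rewrite big1 ?addr0 // => b /negbTE; rewrite eq_sym => ->; rewrite mul0r.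
Qed.

Lemma mulopBl A A' A'' : mul (subop A A') A'' = subop (mul A A'') (mul A' A'').
Proof.
apply: op_ext => a b; rewrite /mul /subop -sumrB.
by apply: eq_bigr => c _; rewrite mulrBl.
Qed.

Lemma mulopBr A A' A'' : mul A'' (subop A A') = subop (mul A'' A) (mul A'' A').
Proof.
apply: op_ext => a b; rewrite /mul /subop -sumrB.
by apply: eq_bigr => c _; rewrite mulrBr.
Qed.

Lemma tr_subop A A' : tr (subop A A') = tr A - tr A'.
Proof. by rewrite /tr /subop sumrB. Qed.

Lemma tr_complop_mul P A : tr (mul (complop P) A) = tr A - tr (mul P A).
Proof. by rewrite /complop mulopBl tr_subop mul1op. Qed.

Lemma app_mul A A' v : app (mul A A') v = app A (app A' v).
Proof.
apply: functional_extensionality => a; rewrite /app /mul.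
under eq_bigr => b _ do rewrite big_distrl /=.
rewrite exchange_big /=; apply: eq_bigr => c _.
by rewrite big_distrr /=; apply: eq_bigr => b _; rewrite mulrA.
Qed.

Lemma app_ket A c : app A (ket c) = A^~ c.
Proof. by apply: functional_extensionality => a; exact: sum_mul_ket. Qed.

Lemma app_lin A k u w :
  app A (fun a => k * u a + w a) = (fun a => k * app A u a + app A w a).
Proof.
apply: functional_extensionality => a; rewrite /app big_distrr -big_split /=.
by apply: eq_bigr => b _; ring.
Qed.

Lemma app_complop P v : app (complop P) v = (fun a => v a - app P v a).
Proof.
apply: functional_extensionality => a; rewrite /app /complop /subop.
under eq_bigr => b _ do rewrite mulrBl.
rewrite sumrB; congr (_ - _).
by have := congr1 (fun f => f a) (app1op v).
Qed.

Lemma app_zeroop v : app (@zeroop R X) v = (fun _ => 0).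
Proof.
by apply: functional_extensionality => a; rewrite /app big1 // => b _; rewrite mul0r.
Qed.

Lemma app0 A : app A (fun _ => 0) = (fun _ => 0).
Proof.
by apply: functional_extensionality => a; rewrite /app big1 // => b _; rewrite mulr0.
Qed.

Lemma app_eq0_mul A M : (forall c, app M (app A (ket c)) = (fun _ => 0)) ->
  mul M A = @zeroop R X.
Proof.
move=> H; apply: op_ext => x c.
by have := congr1 (fun f => f x) (H c); rewrite app_ket.
Qed.

Lemma projector_idem P : projector P -> mul P P = P.
Proof. by case=> _ h; apply: op_ext. Qed.

Lemma inrange_projP P v : projector P -> (inrange P v <-> app P v = v).
Proof.
move=> /projector_idem PP; split; last by move=> h; exists v => a; rewrite h.
case=> w hw; have -> : v = app P w by apply: functional_extensionality.
by rewrite -app_mul PP.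
Qed.

Lemma dot_hermitian A u w : hermitian A -> dot u (app A w) = dot (app A u) w.
Proof.
move=> hA; rewrite /dot /app.
under eq_bigr => a _ do rewrite big_distrr /=.
rewrite exchange_big /=; apply: eq_bigr => b _.
rewrite rmorph_sum big_distrl /=; apply: eq_bigr => a _.
by rewrite rmorphM /= hA; ring.
Qed.

Lemma dot_ge0 u : 0 <= dot u u.
Proof. by apply: sumr_ge0 => a _; rewrite mulrC mul_conjC_ge0. Qed.

Lemma dot_eq0 u : dot u u = 0 -> u = (fun _ => 0).
Proof.
move=> h; apply: functional_extensionality => a.
have H b : true -> 0 <= (u b)^* * u b by rewrite mulrC mul_conjC_ge0.
have /eqP := psumr_eq0P H h isT (i := a).
by rewrite mulrC mul_conjC_eq0 => /eqP.
Qed.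

Lemma qform_ket A c : qform A (ket c) = A c c.
Proof. by rewrite /qform; under eq_bigr => a _ do rewrite sum_mul_ket; rewrite sum_ket_mul. Qed.

Lemma tr_qform A : tr A = \sum_c qform A (ket c).
Proof. by apply: eq_bigr => c _; rewrite qform_ket. Qed.

Lemma psd_tr_ge0 A : psd A -> 0 <= tr A.
Proof. by move=> hA; rewrite tr_qform; apply: sumr_ge0 => c _; apply: hA. Qed.

Lemma qform_dot A v : qform A v = dot v (app A v).
Proof.
rewrite /qform /dot /app; apply: eq_bigr => a _; rewrite big_distrr /=.
by apply: eq_bigr => b _; rewrite mulrA.
Qed.

Lemma qform_conj A M v : hermitian A -> qform (mul A (mul M A)) v = qform M (app A v).
Proof.
move=> hA; rewrite !qform_dot !app_mul -dot_hermitian //.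
Qed.

Lemma psd_conj A M : hermitian A -> psd M -> psd (mul A (mul M A)).
Proof. by move=> hA hM v; rewrite -/(qform _ _) qform_conj //; exact: hM. Qed.

Lemma hermitian_complop P : hermitian P -> hermitian (complop P).
Proof.
move=> hP a b; rewrite /complop /subop rmorphB /= -hP /idop eq_sym.
by case: (b == a); rewrite ?conjC1 ?conjC0.
Qed.

Lemma projector_complop P : projector P -> projector (complop P).
Proof.
move=> hP; have PP := projector_idem hP; case: hP => hP _.
split; first exact: hermitian_complop.
move=> a b; rewrite /complop mulopBl !mulopBr !mul1op mulop1 PP.
by rewrite /subop /= subrr subr0.
Qed.

Lemma projector_idop : projector (@idop R X).
Proof.
split=> a b; last by rewrite mul1op.
by rewrite /idop eq_sym; case: (b == a); rewrite ?conjC1 ?conjC0.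
Qed.

Lemma mul_proj_complop P : projector P -> mul P (complop P) = @zeroop R X.
Proof.
move=> hP; rewrite /complop mulopBr mulop1 projector_idem //.
by apply: op_ext => a b; exact: subrr.
Qed.

Lemma complopK P : complop (complop P) = P.
Proof. by apply: op_ext => a b; rewrite /complop /subop opprB addrC subrK. Qed.

Lemma tr_proj_mul P M : projector P -> tr (mul P M) = \sum_c qform M (app P (ket c)).
Proof.
move=> hP; rewrite -{1}(projector_idem hP) -mulopA tr_mulC -mulopA tr_qform.
by apply: eq_bigr => c _; rewrite qform_conj //; case: hP.
Qed.

Lemma tr_proj_mul_ge0 P M : projector P -> psd M -> 0 <= tr (mul P M).
Proof. by move=> hP hM; rewrite tr_proj_mul //; apply: sumr_ge0 => c _; apply: hM. Qed.

Lemma tr_proj_mul_le P M : projector P -> psd M -> tr (mul P M) <= tr M.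
Proof.
move=> hP hM; rewrite -subr_ge0 -tr_complop_mul.
exact: tr_proj_mul_ge0 (projector_complop hP) hM.
Qed.

Lemma qform_outer u v : qform (outer u u) v = dot v u * (dot v u)^*.
Proof.
rewrite /qform /outer /dot rmorph_sum big_distrl /=; apply: eq_bigr => a _.
rewrite big_distrr /=; apply: eq_bigr => b _.
by rewrite rmorphM /= conjCK; ring.
Qed.

Lemma psd_outer u : psd (outer u u).
Proof. by move=> v; rewrite -/(qform _ _) qform_outer; exact: mul_conjC_ge0. Qed.

Lemma tr_mul_outer A u : tr (mul A (outer u u)) = dot u (app A u).
Proof.
rewrite /tr /mul /outer /dot /app; apply: eq_bigr => a _.
by rewrite big_distrr /=; apply: eq_bigr => b _; ring.
Qed.

Lemma tr_outer_mul A v : tr (mul (outer v v) A) = qform A v.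
Proof. by rewrite tr_mulC tr_mul_outer qform_dot. Qed.

Lemma tr_outer u : tr (outer u u) = dot u u.
Proof. by rewrite -{1}(mul1op (outer u u)) tr_mul_outer app1op. Qed.

Lemma qform_add A u w t :
  qform A (fun a => u a + t * w a) =
  qform A u + t * sesq A u w + t^* * sesq A w u + t * t^* * qform A w.
Proof.
have E a b : (u a + t * w a)^* * A a b * (u b + t * w b) =
  (u a)^* * A a b * u b + t * ((u a)^* * A a b * w b) + t^* * ((w a)^* * A a b * u b)
  + t * t^* * ((w a)^* * A a b * w b).
  by rewrite rmorphD rmorphM /=; ring.
rewrite /qform /sesq.
under eq_bigr => a _ do under eq_bigr => b _ do rewrite E.
under eq_bigr => a _ do rewrite !big_split /= -!big_distrr /=.
by rewrite !big_split /= -!big_distrr /=.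
Qed.

Lemma sesq_ketl A u x : sesq A (ket x) u = app A u x.
Proof.
rewrite /sesq /app -(sum_ket_mul (fun a => \sum_b A a b * u b) x).
by apply: eq_bigr => a _; rewrite big_distrr /=; apply: eq_bigr => b _; rewrite mulrA.
Qed.

End Operators.

Arguments ket {R X} c _.

Section ComplexQuadratic.
Variable R : realType.
Local Notation C := R[i].

Lemma lin_coef_eq0_of_real_quad_ge0 (c d : C) : 0 <= d ->
  (forall s : C, s \is Num.real -> 0 <= s * c + s * s * d) -> c = 0.
Proof.
move=> d0 H.
have cR : c \is Num.real.
  have := H 1 (rpred1 _); rewrite !mul1r => h1.
  by rewrite -(addrK d c) rpredB // ger0_real.
have d1 : 0 < d + 1 by apply: ltr_wpDl d0 ltr01.
have d1n : d + 1 != 0 by rewrite gt_eqF.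
(* the minimum of the quadratic is reached near [s = - c / (d + 1)] *)
set s := - c / (d + 1).
have sR : s \is Num.real by rewrite rpredM ?rpredN ?rpredV // ger0_real // ltW.
have := H s sR.
have -> : s * c + s * s * d = - (c * c / ((d + 1) * (d + 1))) by rewrite /s; field.
rewrite oppr_ge0 => hle.
have hge : 0 <= c * c / ((d + 1) * (d + 1)).
  have csq : 0 <= c * c by have := mul_conjC_ge0 c; rewrite (conj_Creal cR).
  by apply: divr_ge0 => //; apply: mulr_ge0; apply: ltW.
have /eqP : c * c / ((d + 1) * (d + 1)) = 0 by apply: le_anti; rewrite hle hge.
by rewrite mulf_eq0 invr_eq0 !mulf_eq0 (negbTE d1n) !orbb orbF => /eqP.
Qed.

Lemma lin_coefs_eq0_of_quad_ge0 (b g d : C) : 0 <= d ->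
  (forall t : C, 0 <= t * b + t^* * g + t * t^* * d) -> b = 0 /\ g = 0.
Proof.
move=> d0 H.
have e1 : b + g = 0.
  apply: (lin_coef_eq0_of_real_quad_ge0 d0) => s sR.
  have := H s; rewrite (conj_Creal sR).
  by have -> : s * b + s * g + s * s * d = s * (b + g) + s * s * d by ring.
have e2 : 'i * (b - g) = 0.
  apply: (lin_coef_eq0_of_real_quad_ge0 d0) => s sR.
  have := H ('i * s); rewrite rmorphM /= (conj_Creal sR) conjCi.
  have hi : 'i * 'i = -1 :> C by rewrite -expr2 sqrCi.
  have -> : 'i * s * b + - 'i * s * g + 'i * s * (- 'i * s) * d
     = s * ('i * (b - g)) + s * s * d * (- ('i * 'i)) by ring.
  by rewrite hi opprK mulr1.
move: e2 => /eqP; rewrite mulf_eq0 (negbTE (neq0Ci _)) /= subr_eq0 => /eqP bg.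
by move: e1; rewrite bg -mulr2n => /eqP; rewrite mulrn_eq0 /= => /eqP ->.
Qed.

End ComplexQuadratic.

Section PsdKernel.
Variable R : realType.
Local Notation C := R[i].
Variable X : {fset nat}.
Implicit Types (A M P : op R X) (u v w : basis X -> C).

Lemma psd_sesq_eq0 A u : psd A -> qform A u = 0 ->
  (forall w, sesq A w u = 0) /\ (forall w, sesq A u w = 0).
Proof.
move=> hA hu.
have H w : sesq A u w = 0 /\ sesq A w u = 0.
  apply: lin_coefs_eq0_of_quad_ge0 (hA w) _ => t.
  by have := hA (fun a => u a + t * w a); rewrite -/(qform _ _) qform_add hu add0r.
by split => w; case: (H w).
Qed.

Lemma psd_qform_eq0P A u : psd A -> (qform A u = 0 <-> app A u = (fun _ => 0)).
Proof.
move=> hA; split => [h|h].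
  by apply: functional_extensionality => x; rewrite -sesq_ketl; exact: (psd_sesq_eq0 hA h).1.
by rewrite qform_dot h /dot; apply: big1 => a _; exact: mulr0.
Qed.

(* [tr (P M)] is the sum of the nonnegative [qform M (P e_c)]. *)
Lemma tr_proj_mul_eq0P P M : projector P -> psd M ->
  tr (mul P M) = 0 <-> (forall v, app P v = v -> app M v = (fun _ => 0)).
Proof.
move=> hP hM; rewrite tr_proj_mul //; split => [h0 v hv|H].
  have hq c : qform M (app P (ket c)) = 0 by apply: (psumr_eq0P (fun c _ => hM _) h0).
  have MP : mul M P = @zeroop R X by apply: app_eq0_mul => c; apply/(psd_qform_eq0P _ hM).
  by rewrite -hv -app_mul MP app_zeroop.
apply: big1 => c _; apply/(psd_qform_eq0P _ hM); apply: H.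
by rewrite -app_mul projector_idem.
Qed.

End PsdKernel.

Lemma le1_of_sqr_le (R : numFieldType) (x : R) : 0 <= x -> x * x <= x -> x <= 1.
Proof.
move=> x0 xx; move: x0; rewrite le_eqVlt => /orP[/eqP <-|xpos]; first by rewrite ler01.
have : 0 <= x * (1 - x) by rewrite mulrBr mulr1 subr_ge0.
by rewrite pmulr_rge0 // subr_ge0.
Qed.

Section Subspace.
Variable R : realType.
Local Notation C := R[i].
Variable X : {fset nat}.
Implicit Types (P : op R X) (u v w : basis X -> C).

Lemma projector_diag_le1 P a : projector P -> P a a <= 1.
Proof.
case=> hP PP.
have E : P a a = \sum_c P a c * (P a c)^*.
  by rewrite -PP /mul; apply: eq_bigr => c _; rewrite (hP c a).
have x0 : 0 <= P a a by rewrite E; apply: sumr_ge0 => c _; exact: mul_conjC_ge0.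
apply: le1_of_sqr_le => //.
rewrite {3}E (bigD1 a) //= (conj_Creal (ger0_real x0)) lerDl.
by apply: sumr_ge0 => c _; exact: mul_conjC_ge0.
Qed.

Lemma tr_projector_le P : projector P -> tr P <= #|basis X|%:R.
Proof.
move=> hP; rewrite /tr -sumr_const; apply: ler_sum => a _.
exact: projector_diag_le1.
Qed.

Lemma projector_zeroop : projector (@zeroop R X).
Proof.
split => a b; first by rewrite /zeroop conjC0.
by rewrite /mul /zeroop big1 // => c _; rewrite mul0r.
Qed.

Lemma projector_add_outer P u : projector P -> app P u = (fun _ => 0) -> dot u u != 0 ->
  projector (fun a b => P a b + (dot u u)^-1 * outer u u a b).
Proof.
move=> hP Pu dn0; have PP := projector_idem hP; case: hP => hPh _.
set k := (dot u u)^-1.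
have kR : k^* = k by rewrite /k fmorphV /= (conj_Creal (ger0_real (dot_ge0 u))).
have Pu' a : \sum_c P a c * u c = 0 by have := congr1 (fun f => f a) Pu.
have Puc b : \sum_c (u c)^* * P c b = 0.
  transitivity ((app P u b)^*); last by rewrite Pu conjC0.
  rewrite /app rmorph_sum; apply: eq_bigr => c _.
  by rewrite rmorphM /= -hPh mulrC.
split => a b.
  rewrite rmorphD rmorphM /= kR -hPh /outer rmorphM /= conjCK.
  by congr (_ + _); ring.
have E c : (P a c + k * outer u u a c) * (P c b + k * outer u u c b) =
   P a c * P c b + (k * (u b)^*) * (P a c * u c) + (k * u a) * ((u c)^* * P c b)
   + (k * k * (u a * (u b)^*)) * ((u c)^* * u c).
  by rewrite /outer; ring.
rewrite /mul; under eq_bigr => c _ do rewrite E.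
rewrite !big_split /= -!big_distrr /= Pu' Puc -/(dot u u).
have -> : \sum_c P a c * P c b = P a b by have := congr1 (fun f => f a b) PP.
by rewrite /outer /k; field.
Qed.

Variable S : (basis X -> C) -> Prop.
Hypothesis S0 : S (fun _ => 0).
Hypothesis Slin : forall k u w, S u -> S w -> S (fun a => k * u a + w a).

(* A vector of [S] outside the range of [P] contributes its component
   orthogonal to that range as a new rank-one summand. *)
Lemma projector_extend P v : projector P -> (forall w, S (app P w)) -> S v -> app P v <> v ->
  exists P', [/\ projector P', forall w, S (app P' w) & tr P' = tr P + 1].
Proof.
move=> hP hS Sv hv.
set u := fun a => v a - app P v a.
have Su : S u.
  have := Slin (-1) (hS v) Sv.
  by have -> : (fun a => -1 * app P v a + v a) = u
    by apply: functional_extensionality => a; rewrite /u; ring.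
have Pu : app P u = (fun _ => 0).
  have -> : u = app (complop P) v by rewrite app_complop.
  by rewrite -app_mul mul_proj_complop // app_zeroop.
have dn0 : dot u u != 0.
  apply/eqP => /dot_eq0 h; apply: hv; apply: functional_extensionality => a.
  by have /eqP := congr1 (fun f => f a) h; rewrite subr_eq0 => /eqP.
exists (fun a b => P a b + (dot u u)^-1 * outer u u a b); split.
- exact: projector_add_outer.
- move=> w.
  have -> : app (fun a b => P a b + (dot u u)^-1 * outer u u a b) w =
            (fun a => ((dot u u)^-1 * dot u w) * u a + app P w a).
    apply: functional_extensionality => a; rewrite /app /dot.
    transitivity (\sum_b (((dot u u)^-1 * ((u b)^* * w b)) * u a + P a b * w b)).
      by apply: eq_bigr => b _; rewrite /outer; ring.
    by rewrite big_split /= -big_distrl -big_distrr.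
  exact: Slin.
- rewrite /tr big_split /= -big_distrr /= -/(tr P) -/(tr (outer u u)) tr_outer.
  by rewrite mulVf.
Qed.

Lemma projector_grow n :
  (exists P, [/\ projector P, forall w, S (app P w) & forall v, S v -> app P v = v]) \/
  (exists P, [/\ projector P, forall w, S (app P w) & tr P = n%:R]).
Proof.
elim: n => [|n [IH|[P [hP hS htr]]]]; [right|by left|].
  exists (@zeroop R X); split; first exact: projector_zeroop.
    by move=> w; rewrite app_zeroop.
  by rewrite /tr big1.
case: (classic (forall v, S v -> app P v = v)) => [H|/not_all_ex_not[v]].
  by left; exists P.
move=> /(imply_to_and (S v)) [Sv hv].
have [P' [hP' hS' htr']] := projector_extend hP hS Sv hv.
by right; exists P'; rewrite htr' htr -natr1.
Qed.

(* The trace of a projector is bounded by the dimension, so [projector_extend]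
   cannot apply [#|basis X|.+1] times. *)
Lemma projector_onto : exists P, projector P /\ (forall v, app P v = v <-> S v).
Proof.
case: (projector_grow #|basis X|.+1) => [[P [hP hS hv]]|[P [hP _ htr]]].
  by exists P; split => // v; split; [move=> <- | exact: hv].
by have := tr_projector_le hP; rewrite htr ler_nat ltnn.
Qed.

End Subspace.

Section Ranges.
Variable R : realType.
Local Notation C := R[i].
Variable X : {fset nat}.
Implicit Types (A B P Q : op R X) (u v w : basis X -> C).

Lemma projector_ker A : exists P, projector P /\
  (forall v, app P v = v <-> app A v = (fun _ => 0)).
Proof.
apply: projector_onto; first by rewrite app0.
move=> k u w hu hw; rewrite app_lin hu hw.
by apply: functional_extensionality => a; rewrite mulr0 addr0.
Qed.

(* The component [chi] of [v] orthogonal to [range Q] lies in [range P], to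
   which [v] is orthogonal, so [<chi, chi> = <v, chi> = 0]. *)
Lemma complop_range_sub P Q : projector P -> projector Q ->
  (forall v, app (complop Q) v = v -> app P v = v) ->
  forall v, app (complop P) v = v -> app Q v = v.
Proof.
move=> hP hQ sub v hv.
have hQc := projector_complop hQ.
set chi := app (complop Q) v.
have Pchi : app P chi = chi by apply: sub; rewrite /chi -app_mul projector_idem.
have Pv : app P v = (fun _ => 0).
  by rewrite -hv -app_mul mul_proj_complop // app_zeroop.
have hQh : hermitian (complop Q) by case: hQc.
have hPh : hermitian P by case: hP.
have : dot chi chi = 0.
  rewrite {1}/chi -dot_hermitian // -app_mul projector_idem // -/chi.
  rewrite -Pchi dot_hermitian // Pv /dot.
  by apply: big1 => a _; rewrite conjC0 mul0r.
move=> /dot_eq0; rewrite /chi app_complop => h.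
apply: functional_extensionality => a; have /eqP := congr1 (fun f => f a) h.
by rewrite subr_eq0 => /eqP.
Qed.

End Ranges.

Section LinearForm.
Variable R : realType.
Local Notation C := R[i].
Variable X : {fset nat}.
Local Notation OP := (op R X).
Implicit Types (A G M P s : OP) (D : OP -> C).

Definition linear_form D :=
  forall k A A', D (fun a b => k * A a b + A' a b) = k * D A + D A'.

Lemma linear_form_tr : linear_form (@tr R X).
Proof. by move=> k A A'; rewrite /tr big_split /= big_distrr. Qed.

Lemma linear_form_tr_mul A : linear_form (fun s => tr (mul A s)).
Proof.
move=> k A1 A2; rewrite /tr big_distrr -big_split /=; apply: eq_bigr => a _.
by rewrite /mul big_distrr -big_split /=; apply: eq_bigr => b _; ring.
Qed.

Lemma linear_form0 D : linear_form D -> D (@zeroop R X) = 0.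
Proof.
move=> hD; have := hD 1 (@zeroop R X) (@zeroop R X).
have -> : (fun a b => 1 * @zeroop R X a b + @zeroop R X a b) = @zeroop R X.
  by apply: op_ext => a b; rewrite /zeroop mulr0 addr0.
by rewrite mul1r => /(congr1 (fun y => y - D (@zeroop R X))); rewrite subrr addrK.
Qed.

Lemma linear_form_sum D (I : Type) (r : seq I) (k : I -> C) (F : I -> OP) : linear_form D ->
  D (fun a b => \sum_(i <- r) k i * F i a b) = \sum_(i <- r) k i * D (F i).
Proof.
move=> hD; elim: r => [|i r IH].
  have -> : (fun a b => \sum_(j <- [::]) k j * F j a b) = @zeroop R X.
    by apply: op_ext => a b; rewrite big_nil.
  by rewrite linear_form0 // big_nil.
have -> : (fun a b => \sum_(j <- i :: r) k j * F j a b) =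
  (fun a b => k i * F i a b + (fun a b => \sum_(j <- r) k j * F j a b) a b).
  by apply: op_ext => a b; rewrite big_cons.
by rewrite hD IH big_cons.
Qed.

Definition form_op D : OP := fun x y => D (outer (ket y) (ket x)).

Lemma form_opE D : linear_form D -> forall M, D M = tr (mul M (form_op D)).
Proof.
move=> hD M.
have EM : M = (fun a b => \sum_(p : basis X * basis X)
                 M p.1 p.2 * outer (ket p.1) (ket p.2) a b).
  apply: op_ext => a b.
  rewrite -(pair_big xpredT xpredT (fun i j => M i j * outer (ket i) (ket j) a b)) /=.
  rewrite /outer /ket.
  under eq_bigr => i _ do under eq_bigr => j _ do
    rewrite conjC_nat mulrA (eq_sym b j) -/(ket b j).
  under eq_bigr => i _ do rewrite sum_mul_ket (eq_sym a i) -/(ket a i).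
  by rewrite (sum_mul_ket (M^~ b)).
rewrite {1}EM linear_form_sum //.
by rewrite -(pair_big xpredT xpredT (fun i j => M i j * D (outer (ket i) (ket j)))).
Qed.

Lemma psd_form_op D : linear_form D -> (forall s, psd s -> 0 <= D s) -> psd (form_op D).
Proof.
move=> hD hpos v; rewrite -/(qform _ _) -tr_outer_mul -form_opE //.
exact: hpos (psd_outer v).
Qed.

Lemma qform_vanish_of_le P G : psd G ->
  (forall s, psd s -> tr (mul s G) <= tr s - tr (mul P s)) ->
  forall v, app P v = v -> qform G v = 0.
Proof.
move=> hG H v hv.
have := H _ (psd_outer v).
rewrite tr_outer_mul tr_outer tr_mul_outer hv subrr => hle.
by apply: le_anti; rewrite hle; apply: hG.
Qed.

Lemma psd_mul_proj_eq0 P G : projector P -> psd G ->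
  (forall v, app P v = v -> qform G v = 0) ->
  mul G P = @zeroop R X /\ mul P G = @zeroop R X.
Proof.
move=> hP hG H.
have hPh : hermitian P by case: hP.
have colP c : app P (P^~ c) = P^~ c by rewrite -app_ket -app_mul projector_idem.
split.
  apply: app_eq0_mul => c; rewrite app_ket.
  exact/(psd_qform_eq0P _ hG)/H/colP.
apply: op_ext => c x.
rewrite /zeroop -((psd_sesq_eq0 hG (H _ (colP c))).2 (ket x)) /sesq /mul.
apply: eq_bigr => a _; rewrite (hPh c a).
by rewrite (sum_mul_ket (fun b => (P a c)^* * G a b)).
Qed.

(* [G] kills [range P] on both sides, so [tr (s G)] only sees the compression
   of [s] to the orthogonal complement of [range P]. *)
Lemma le_of_qform_vanish P G : projector P -> psd G ->
  (forall s, psd s -> tr (mul s G) <= tr s) ->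
  (forall v, app P v = v -> qform G v = 0) ->
  forall s, psd s -> tr (mul s G) <= tr s - tr (mul P s).
Proof.
move=> hP hG hGle H s hs.
have [GP PG] := psd_mul_proj_eq0 hP hG H.
set Pc := complop P.
have GPc : mul G Pc = G.
  by rewrite /Pc /complop mulopBr mulop1 GP; apply: op_ext => a b; rewrite /subop subr0.
have PcG : mul Pc G = G.
  by rewrite /Pc /complop mulopBl mul1op PG; apply: op_ext => a b; rewrite /subop subr0.
set t := mul Pc (mul s Pc).
have ht : psd t by apply: psd_conj => //; apply: hermitian_complop; case: hP.
have tG : tr (mul t G) = tr (mul s G) by rewrite /t -!mulopA PcG tr_mulC -mulopA GPc.
have trt : tr t = tr s - tr (mul P s).
  by rewrite /t tr_mulC -mulopA (projector_idem (projector_complop hP)) tr_mulC tr_complop_mul.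
by rewrite -tG -trt; exact: hGle.
Qed.

Section PositiveForm.
Variable D : OP -> C.
Hypothesis D_lin : linear_form D.
Hypothesis D_ge0 : forall s, psd s -> 0 <= D s.
Hypothesis D_le_tr : forall s, psd s -> D s <= tr s.

Lemma form_le_tr_complP P : projector P ->
  (forall s, psd s -> D s <= tr s - tr (mul P s)) <->
  (forall v, app P v = v -> D (outer v v) = 0).
Proof.
move=> hP; have hG := psd_form_op D_lin D_ge0.
have Hle s : psd s -> tr (mul s (form_op D)) <= tr s by rewrite -form_opE //; exact: D_le_tr.
split => [H v hv|H s hs].
  rewrite form_opE // tr_outer_mul; apply: (qform_vanish_of_le hG _ hv) => s hs.
  by rewrite -form_opE //; apply: H.
rewrite form_opE //; apply: (le_of_qform_vanish hP hG Hle) => // v hv.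
by rewrite -tr_outer_mul -form_opE //; apply: H.
Qed.

Lemma projector_form_ker : exists P, projector P /\
  (forall v, app P v = v <-> D (outer v v) = 0).
Proof.
have hG := psd_form_op D_lin D_ge0.
have [P [hP H]] := projector_ker (form_op D).
exists P; split => // v.
by rewrite H form_opE // tr_outer_mul (psd_qform_eq0P _ hG).
Qed.

End PositiveForm.

End LinearForm.

Section Extension.
Variable R : realType.

Lemma extO_glue (S Z X : {fset nat}) (A : op R S) (a b : basis Z) (c c' : basis X) :
  S `<=` Z -> Z `<=` X -> reset Z c = c -> reset Z c' = c' ->
  EO X A (glue a c) (glue b c') = if c == c' then EO Z A a b else 0.
Proof.
move=> SZ ZX hc hc'; rewrite /extO (agree_out_glue _ _ SZ ZX hc hc').
by rewrite !(restr_glue_sub _ _ SZ ZX); case: (c == c').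
Qed.

Lemma extO_full (S : {fset nat}) (A : op R S) : EO S A = A.
Proof.
apply: op_ext => a b; rewrite /extO !restr_full.
by have -> : agree_out S a b by apply/forallP => t; rewrite fsvalP.
Qed.

Lemma extO_extO (S S' Z : {fset nat}) (A : op R S) :
  S `<=` S' -> S' `<=` Z -> EO Z (EO S' A) = EO Z A.
Proof.
move=> SS' S'Z; apply: op_ext => a b; rewrite /extO !(restr_restr _ SS' S'Z).
have -> : agree_out S a b = agree_out S' a b && agree_out S (restr S' a) (restr S' b).
  apply/idP/idP.
    move=> /forallP H; apply/andP; split; apply/forallP => t; apply/implyP => ht.
      by apply: (implyP (H t)); apply: contra ht; exact: (fsubsetP SS').
    have tZ : fsval t \in Z := fsubsetP S'Z _ (fsvalP t).
    by rewrite !ffunE (insub_mem tZ); exact: (implyP (H [` tZ])).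
  case/andP => /forallP H1 /forallP H2; apply/forallP => t; apply/implyP => ht.
  case: (boolP (fsval t \in S')) => h; last exact: (implyP (H1 t)).
  have := implyP (H2 [` h]) ht; rewrite !ffunE (insub_mem (fsvalP t)) /=.
  by have -> : [` fsvalP t] = t by apply: val_inj.
by case: (agree_out S' a b); case: (agree_out S _ _).
Qed.

Lemma extO_mul (S X : {fset nat}) (A A' : op R S) : S `<=` X ->
  mul (EO X A) (EO X A') = EO X (mul A A').
Proof.
move=> SX; apply: op_ext => a b.
have ha := reset_idem S a; have hb := reset_idem S b.
rewrite /mul (sum_basis_split _ SX) -(glue_restr_reset S a) -(glue_restr_reset S b).
rewrite (extO_glue _ _ _ (fsubset_refl S) SX ha hb) extO_full.
under eq_bigr => k hk.
  under eq_bigr => c' _ do rewrite (extO_glue _ _ _ (fsubset_refl S) SX ha (eqP hk))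
       (extO_glue _ _ _ (fsubset_refl S) SX (eqP hk) hb) !extO_full.
  over.
rewrite (bigD1 (reset S a)) ?ha //= [X in _ + X]big1 ?addr0; last first.
  move=> k /andP[_ /negbTE]; rewrite eq_sym => ->.
  by apply: big1 => c _; rewrite mul0r.
rewrite eqxx; case: (reset S a == reset S b) => //.
by apply: big1 => c _; rewrite mulr0.
Qed.

Lemma hermitian_extO (S X : {fset nat}) (A : op R S) : hermitian A -> hermitian (EO X A).
Proof.
move=> hA a b; rewrite /extO agree_outC.
by case: (agree_out S b a); rewrite ?conjC0 // -hA.
Qed.

Lemma projector_extO (S X : {fset nat}) (A : op R S) :
  S `<=` X -> projector A -> projector (EO X A).
Proof.
move=> SX hA; split; first by apply: hermitian_extO; case: hA.
by move=> a b; rewrite extO_mul // projector_idem.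
Qed.

Lemma extO_idop (S X : {fset nat}) : S `<=` X -> EO X (@idop R S) = @idop R X.
Proof.
move=> SX; apply: op_ext => a b.
have ha := reset_idem S a; have hb := reset_idem S b.
rewrite -(glue_restr_reset S a) -(glue_restr_reset S b).
rewrite (extO_glue _ _ _ (fsubset_refl S) SX ha hb) extO_full /idop (glue_eq _ _ SX ha hb).
by case: (_ == _).
Qed.

End Extension.

Definition diag_block (R : realType) (Z X : {fset nat}) (c : basis X) (rho : op R X) : op R Z :=
  fun a b => rho (glue a c) (glue b c).
Arguments diag_block {R} Z {X} c rho _ _.

Section Blocks.
Variable R : realType.

Lemma tr_block_split (Z X : {fset nat}) (rho : op R X) : Z `<=` X ->
  tr rho = \sum_(c : basis X | reset Z c == c) tr (diag_block Z c rho).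
Proof. by move=> ZX; rewrite /tr (sum_basis_split _ ZX). Qed.

Lemma tr_extO_mul_block_split (S Z X : {fset nat}) (A : op R S) (rho : op R X) :
  S `<=` Z -> Z `<=` X ->
  tr (mul (EO X A) rho) =
    \sum_(c : basis X | reset Z c == c) tr (mul (EO Z A) (diag_block Z c rho)).
Proof.
move=> SZ ZX; rewrite /tr (sum_basis_split _ ZX); apply: eq_bigr => c /eqP hc.
apply: eq_bigr => a' _; rewrite /mul /diag_block.
rewrite (@sum_basis_block _ Z X c) //.
  by apply: eq_bigr => b' _; rewrite (extO_glue _ _ _ SZ ZX hc hc) eqxx.
move=> b hb; have hb' := reset_idem Z b.
rewrite -(glue_restr_reset Z b) (extO_glue _ _ _ SZ ZX hc hb').
by rewrite eq_sym (negbTE hb) mul0r.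
Qed.

Lemma psd_diag_block (Z X : {fset nat}) (c : basis X) (rho : op R X) :
  Z `<=` X -> reset Z c = c -> psd rho -> psd (diag_block Z c rho).
Proof.
move=> ZX hc hr v.
set v' := fun a : basis X => if reset Z a == c then v (restr Z a) else 0.
have hv' a : reset Z a != c -> v' a = 0 by move=> /negbTE h; rewrite /v' h.
have ev' a' : v' (glue a' c) = v a' by rewrite /v' reset_glue hc eqxx restr_glue.
have := hr v'.
rewrite (@sum_basis_block _ Z X c) //; last first.
  by move=> a ha; rewrite hv' // conjC0; apply: big1 => b _; rewrite !mul0r.
have E1 a' : \sum_b (v' (glue a' c))^* * rho (glue a' c) b * v' b =
    \sum_b' (v a')^* * diag_block Z c rho a' b' * v b'.
  rewrite (@sum_basis_block _ Z X c _ ZX hc); last by move=> b hb; rewrite (hv' b hb) mulr0.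
  by apply: eq_bigr => b' _; rewrite !ev'.
by under eq_bigr => a' _ do rewrite E1.
Qed.

End Blocks.

Section SuperOperator.
Variable R : realType.
Variable V : {fset nat}.
Variable E : superop R V.
Hypothesis HE : DProg E.

Lemma extS_lin (Z : {fset nat}) k (A A' : op R Z) :
  extS E (fun a b => k * A a b + A' a b) = (fun a b => k * extS E A a b + extS E A' a b).
Proof. by apply: op_ext => a b; rewrite /extS; case: HE => lin _ _; apply: lin. Qed.

Lemma extS_scale (Z : {fset nat}) k (A : op R Z) :
  extS E (fun a b => k * A a b) = (fun a b => k * extS E A a b).
Proof.
have lin0 := @linear_form0 R Z (fun A => extS E A _ _).
apply: op_ext => a b; have := congr1 (fun f => f a b) (extS_lin k A (@zeroop R Z)).
rewrite (lin0 a b) /=; last by move=> k' A1 A2; rewrite extS_lin.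
by rewrite addr0 => <-; congr (extS E _ a b); apply: op_ext => i j; rewrite /zeroop addr0.
Qed.

Lemma extS_full (tau : op R V) : extS E tau = E tau.
Proof.
apply: op_ext => a b; rewrite /extS !restr_full; congr (E _ _ _).
by apply: op_ext => u v; rewrite !glue_full.
Qed.

Lemma diag_block_extS (Z X : {fset nat}) (c : basis X) (rho : op R X) :
  V `<=` Z -> Z `<=` X -> diag_block Z c (extS E rho) = extS E (diag_block Z c rho).
Proof.
move=> VZ ZX; apply: op_ext => a b; rewrite /diag_block /extS !(restr_glue_sub _ _ VZ ZX).
by congr (E _ _ _); apply: op_ext => u v; rewrite !(glueA _ _ _ VZ).
Qed.

Lemma psd_extS (Z : {fset nat}) (s : op R Z) : V `<=` Z -> psd s -> psd (extS E s).
Proof. by move=> VZ hs; case: HE => _ h _; apply: h. Qed.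

Lemma tr_extS_le (Z : {fset nat}) (s : op R Z) : V `<=` Z -> psd s -> tr (extS E s) <= tr s.
Proof.
move=> VZ hs; rewrite (tr_block_split _ VZ) [X in _ <= X](tr_block_split _ VZ).
apply: ler_sum => c /eqP hc.
rewrite diag_block_extS ?fsubset_refl // extS_full.
by case: HE => _ _ h; apply: h; exact: psd_diag_block.
Qed.

End SuperOperator.

Lemma ler_gap_eq (R : numDomainType) (x y x' y' : R) :
  y - x = y' - x' -> (x <= y) = (x' <= y').
Proof. by move=> e; rewrite -subr_ge0 e subr_ge0. Qed.

Section Scaling.
Variable R : realType.
Variable Z : {fset nat}.

Lemma tr_scale k (s : op R Z) : tr (fun a b => k * s a b) = k * tr s.
Proof. by rewrite /tr big_distrr. Qed.

Lemma tr_mul_scale k (A s : op R Z) : tr (mul A (fun a b => k * s a b)) = k * tr (mul A s).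
Proof.
rewrite /tr /mul big_distrr; apply: eq_bigr => a _; rewrite big_distrr.
by apply: eq_bigr => b _; rewrite mulrCA.
Qed.

Lemma psd_scale k (s : op R Z) : 0 <= k -> psd s -> psd (fun a b => k * s a b).
Proof.
move=> k0 hs v.
have -> : \sum_a \sum_b (v a)^* * (k * s a b) * v b = k * qform s v.
  rewrite /qform big_distrr; apply: eq_bigr => a _; rewrite big_distrr /=.
  by apply: eq_bigr => b _; ring.
by apply: mulr_ge0 => //; apply: hs.
Qed.

Lemma psd_normalize (s : op R Z) : psd s -> exists k : R[i], 0 < k /\ pdo (fun a b => k * s a b).
Proof.
move=> hs; have t0 := psd_tr_ge0 hs.
have h1 : 0 < 1 + tr s by apply: (lt_le_trans ltr01); rewrite lerDl.
exists (1 + tr s)^-1; split; first by rewrite invr_gt0.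
split; first by apply: psd_scale => //; rewrite invr_ge0 ltW.
by rewrite tr_scale mulrC ler_pdivrMr // mul1r lerDr ler01.
Qed.

End Scaling.

Section Satisfaction.
Variable R : realType.
Variable V : {fset nat}.
Variable E : superop R V.
Hypothesis HE : DProg E.

(* Both formulas are linear in [rho] and split along the diagonal blocks of [rho]
   over the variables outside [V `|` S `|` T], so it suffices to test unnormalized
   states on exactly that space. *)
Lemma sat_tot_psdP (S T Z : {fset nat}) (P : op R S) (Q : op R T) :
  V `|` S `|` T = Z ->
  sat_tot E P Q <->
  (forall s : op R Z, psd s -> tr (mul (EO Z P) s) <= tr (mul (EO Z Q) (extS E s))).
Proof.
move=> <-; set Y := V `|` S `|` T.
have VY : V `<=` Y by rewrite /Y; fsubset_tac.
have SY : S `<=` Y by rewrite /Y; fsubset_tac.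
have TY : T `<=` Y by rewrite /Y; fsubset_tac.
split => [H s hs|H X YX rho [hr _]].
  have [k [k0 hk]] := psd_normalize hs.
  have := H Y (fsubset_refl _) _ hk.
  by rewrite tr_mul_scale extS_scale // tr_mul_scale ler_pM2l.
rewrite (tr_extO_mul_block_split _ _ SY YX) (tr_extO_mul_block_split _ _ TY YX).
apply: ler_sum => c /eqP hc.
by rewrite diag_block_extS //; apply: H; exact: psd_diag_block.
Qed.

Lemma sat_par_psdP (S T Z : {fset nat}) (P : op R S) (Q : op R T) :
  V `|` S `|` T = Z ->
  sat_par E P Q <->
  (forall s : op R Z, psd s ->
     tr (mul (EO Z P) s) <= tr (mul (EO Z Q) (extS E s)) + tr s - tr (extS E s)).
Proof.
move=> <-; set Y := V `|` S `|` T.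
have VY : V `<=` Y by rewrite /Y; fsubset_tac.
have SY : S `<=` Y by rewrite /Y; fsubset_tac.
have TY : T `<=` Y by rewrite /Y; fsubset_tac.
split => [H s hs|H X YX rho [hr _]].
  have [k [k0 hk]] := psd_normalize hs.
  have := H Y (fsubset_refl _) _ hk.
  rewrite tr_mul_scale extS_scale // tr_mul_scale !tr_scale -mulrDr -mulrBr.
  by rewrite ler_pM2l.
rewrite (tr_extO_mul_block_split _ _ SY YX) (tr_extO_mul_block_split _ _ TY YX).
rewrite (tr_block_split _ YX) (tr_block_split (extS E rho) YX) -big_split -sumrB /=.
apply: ler_sum => c /eqP hc.
by rewrite diag_block_extS //; apply: H; exact: psd_diag_block.
Qed.

Section Defects.
Variable Z : {fset nat}.
Hypothesis VZ : V `<=` Z.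
Variable Qz : op R Z.
Hypothesis hQz : projector Qz.

(* On states [s] over [Z], [E |=tot (P, Qz)] reads [tr (P s) <= tr s - tot_defect s]
   and [E |=par (P, Qz)] reads [tr (P s) <= tr s - par_defect s]. *)
Definition tot_defect (s : op R Z) := tr s - tr (mul Qz (extS E s)).
Definition par_defect (s : op R Z) := tr (extS E s) - tr (mul Qz (extS E s)).

Lemma linear_tot_defect : linear_form tot_defect.
Proof. by move=> k A A'; rewrite /tot_defect extS_lin // linear_form_tr linear_form_tr_mul; ring. Qed.

Lemma linear_par_defect : linear_form par_defect.
Proof. by move=> k A A'; rewrite /par_defect extS_lin // linear_form_tr linear_form_tr_mul; ring. Qed.

Lemma par_defect_ge0 s : psd s -> 0 <= par_defect s.
Proof. by move=> hs; rewrite subr_ge0; exact: tr_proj_mul_le hQz (psd_extS HE VZ hs). Qed.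

Lemma par_defect_le_tr s : psd s -> par_defect s <= tr s.
Proof.
move=> hs; apply: le_trans (tr_extS_le HE VZ hs); rewrite lerBlDr lerDl.
exact: tr_proj_mul_ge0 hQz (psd_extS HE VZ hs).
Qed.

Lemma tot_defect_ge0 s : psd s -> 0 <= tot_defect s.
Proof.
move=> hs; rewrite subr_ge0.
exact: le_trans (tr_proj_mul_le hQz (psd_extS HE VZ hs)) (tr_extS_le HE VZ hs).
Qed.

Lemma tot_defect_le_tr s : psd s -> tot_defect s <= tr s.
Proof. by move=> hs; rewrite lerBlDr lerDl; exact: tr_proj_mul_ge0 hQz (psd_extS HE VZ hs). Qed.

Lemma par_defect_complE s : par_defect s = tr (mul (complop Qz) (extS E s)).
Proof. by rewrite tr_complop_mul. Qed.

End Defects.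

Lemma tot_defect_eq0P (Z : {fset nat}) (Qz : op R Z) (s : op R Z) :
  V `<=` Z -> projector Qz -> psd s ->
  tot_defect Qz s = 0 <-> par_defect Qz s = 0 /\ tot_defect (@idop R Z) s = 0.
Proof.
move=> VZ hQz hs.
have hI := @projector_idop R Z.
have -> : tot_defect Qz s = par_defect Qz s + tot_defect (@idop R Z) s.
  by rewrite /tot_defect /par_defect mul1op; ring.
split => [h|[-> ->]]; last by rewrite addr0.
have hp := par_defect_ge0 VZ hQz hs; have ht := tot_defect_ge0 VZ hI hs.
have hp0 : par_defect Qz s = 0.
  by apply: le_anti; rewrite hp andbT -h lerDl.
by split => //; move: h; rewrite hp0 add0r.
Qed.

Lemma sat_totP (S T Z : {fset nat}) (P : op R S) (Q : op R T) :
  V `|` S `|` T = Z -> projector P -> projector Q ->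
  sat_tot E P Q <-> (forall v, app (EO Z P) v = v -> tot_defect (EO Z Q) (outer v v) = 0).
Proof.
move=> eZ hP hQ.
have [VZ SZ TZ] : [/\ V `<=` Z, S `<=` Z & T `<=` Z] by rewrite -eZ; split; fsubset_tac.
have hQz := projector_extO TZ hQ.
rewrite (sat_tot_psdP _ _ eZ) -(form_le_tr_complP (linear_tot_defect (EO Z Q))
  (tot_defect_ge0 VZ hQz) (tot_defect_le_tr VZ hQz) (projector_extO SZ hP)).
have gap s : (tr (mul (EO Z P) s) <= tr (mul (EO Z Q) (extS E s))) =
    (tot_defect (EO Z Q) s <= tr s - tr (mul (EO Z P) s)).
  by apply: ler_gap_eq; rewrite /tot_defect; ring.
by split => H s hs; [rewrite -gap | rewrite gap]; apply: H.
Qed.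

Lemma sat_parP (S T Z : {fset nat}) (P : op R S) (Q : op R T) :
  V `|` S `|` T = Z -> projector P -> projector Q ->
  sat_par E P Q <-> (forall v, app (EO Z P) v = v -> par_defect (EO Z Q) (outer v v) = 0).
Proof.
move=> eZ hP hQ.
have [VZ SZ TZ] : [/\ V `<=` Z, S `<=` Z & T `<=` Z] by rewrite -eZ; split; fsubset_tac.
have hQz := projector_extO TZ hQ.
rewrite (sat_par_psdP _ _ eZ) -(form_le_tr_complP (linear_par_defect (EO Z Q))
  (par_defect_ge0 VZ hQz) (par_defect_le_tr VZ hQz) (projector_extO SZ hP)).
have gap s : (tr (mul (EO Z P) s) <= tr (mul (EO Z Q) (extS E s)) + tr s - tr (extS E s)) =
    (par_defect (EO Z Q) s <= tr s - tr (mul (EO Z P) s)).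
  by apply: ler_gap_eq; rewrite /par_defect; ring.
by split => H s hs; [rewrite -gap | rewrite gap]; apply: H.
Qed.

End Satisfaction.

Section SubspaceOrder.
Variable R : realType.
Local Notation C := R[i].

Lemma sqle_onP (S T U : {fset nat}) (A : op R S) (B : op R T) : S `|` T = U ->
  sqle A B <-> (forall v : basis U -> C, inrange (EO U A) v -> inrange (EO U B) v).
Proof. by move=> <-. Qed.

Lemma sqle_sameP (Z : {fset nat}) (A B : op R Z) : projector A -> projector B ->
  sqle A B <-> (forall v, app A v = v -> app B v = v).
Proof.
move=> hA hB; rewrite (sqle_onP _ _ (fsetUid Z)) !extO_full.
by split => H v; have := H v; rewrite !inrange_projP.
Qed.

Lemma sqle_extOr (S T : {fset nat}) (A : op R S) (B : op R T) :
  T `<=` S -> sqle A (EO S B) -> sqle A B.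
Proof.
move=> TS; rewrite (sqle_onP _ _ (fsetUid S)) (sqle_onP _ _ (fsetUidPl _ _ TS)).
by rewrite (extO_extO _ TS (fsubset_refl S)).
Qed.

Lemma sqle_extOl (S T : {fset nat}) (A : op R S) (B : op R T) :
  S `<=` T -> sqle (EO T A) B -> sqle A B.
Proof.
move=> ST; rewrite (sqle_onP _ _ (fsetUid T)) (sqle_onP _ _ (fsetUidPr _ _ ST)).
by rewrite (extO_extO _ ST (fsubset_refl T)).
Qed.

Section Extremal.
Variable Z : {fset nat}.
Variable sat : op R Z -> Prop.

(* These are, up to conversion, the predicates [epsilon] picks from in [wp], [wlp]
   and [sp]. *)
Definition largest (P : op R Z) :=
  projector P /\ sat P /\ forall P', projector P' -> sat P' -> sqle P' P.
Definition smallest (P : op R Z) :=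
  projector P /\ sat P /\ forall P', projector P' -> sat P' -> sqle P P'.

Variable good : (basis Z -> C) -> Prop.
Hypothesis satP : forall P, projector P -> sat P <-> (forall v, app P v = v -> good v).
Hypothesis good_range : exists P, projector P /\ (forall v, app P v = v <-> good v).

Lemma largest_exists : exists P, largest P.
Proof.
have [P [hP HP]] := good_range.
exists P; split=> //; split => [|P' hP' /(satP hP') H'].
  by apply/(satP hP) => v /HP.
by apply/sqle_sameP => // v /H' /HP.
Qed.

Lemma largest_rangeP P : largest P -> forall v, app P v = v <-> good v.
Proof.
case=> hP [/(satP hP) H max] v; split; first exact: H.
have [P0 [hP0 HP0]] := good_range.
have /(sqle_sameP hP0 hP) sub := max P0 hP0 ((satP hP0).2 (fun v => (HP0 v).1)).
by move/HP0; exact: sub.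
Qed.

End Extremal.

End SubspaceOrder.

Section Transformers.
Variable R : realType.
Variable V : {fset nat}.
Variable E : superop R V.
Hypothesis HE : DProg E.

Lemma sat_tot_sat_par (S T : {fset nat}) (P : op R S) (Q : op R T) :
  sat_tot E P Q -> sat_par E P Q.
Proof.
move=> H X hX rho hr; apply: le_trans (H X hX rho hr) _.
have VX : V `<=` X by apply: fsubset_trans hX; fsubset_tac.
rewrite -addrA lerDl subr_ge0; case: hr => hr _; exact/(tr_extS_le HE VX hr).
Qed.

Lemma sat_par_extOr (S T T' : {fset nat}) (P : op R S) (Q : op R T) :
  T `<=` T' -> sat_par E P Q -> sat_par E P (EO T' Q).
Proof.
move=> TT' H X hX; rewrite (extO_extO _ TT'); last by apply: fsubset_trans hX; fsubset_tac.
by apply: H; apply: fsubset_trans hX; rewrite fsetUSS.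
Qed.

Lemma sat_par_extOl (S S' T : {fset nat}) (P : op R S) (Q : op R T) :
  S `<=` S' -> sat_par E P Q -> sat_par E (EO S' P) Q.
Proof.
move=> SS' H X hX; rewrite (extO_extO _ SS'); last by apply: fsubset_trans hX; fsubset_tac.
by apply: H; apply: fsubset_trans hX; rewrite fsetUSS // fsetUSS.
Qed.

Lemma sat_par_complP (S T Z : {fset nat}) (P : op R S) (Q : op R T) :
  V `|` S `|` T = Z -> projector P -> projector Q ->
  sat_par E P Q <->
  (forall w, app (complop (EO Z Q)) w = w ->
     forall v, app (EO Z P) v = v -> app (extS E (outer v v)) w = (fun _ => 0)).
Proof.
move=> eZ hP hQ.
have [VZ TZ] : V `<=` Z /\ T `<=` Z by rewrite -eZ; split; fsubset_tac.
have hQc := projector_complop (projector_extO TZ hQ).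
rewrite (sat_parP HE eZ hP hQ).
split => [H w hw v hv | H v hv].
  move: (H v hv); rewrite par_defect_complE.
  by move/(tr_proj_mul_eq0P hQc (psd_extS HE VZ (psd_outer v))); apply.
rewrite par_defect_complE.
by apply/(tr_proj_mul_eq0P hQc (psd_extS HE VZ (psd_outer v))) => w hw; exact: H.
Qed.

Section Postcondition.
Variable W : {fset nat}.
Local Notation Z := (V `|` W).
Variable Q : op R W.
Hypothesis hQ : projector Q.

Let eZ : V `|` Z `|` W = Z. Proof. by fset_eq_tac. Qed.
Let VZ : V `<=` Z. Proof. by fsubset_tac. Qed.
Let hQz : projector (EO Z Q). Proof. by apply: projector_extO hQ; fsubset_tac. Qed.

Lemma sat_tot_kerP (P : op R Z) : projector P ->
  sat_tot E P Q <-> (forall v, app P v = v -> tot_defect E (EO Z Q) (outer v v) = 0).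
Proof. by move=> hP; rewrite (sat_totP HE eZ hP hQ) extO_full. Qed.

Lemma sat_par_kerP (P : op R Z) : projector P ->
  sat_par E P Q <-> (forall v, app P v = v -> par_defect E (EO Z Q) (outer v v) = 0).
Proof. by move=> hP; rewrite (sat_parP HE eZ hP hQ) extO_full. Qed.

Let tot_kernel := projector_form_ker (linear_tot_defect HE _) (tot_defect_ge0 HE VZ hQz).
Let par_kernel := projector_form_ker (linear_par_defect HE _) (par_defect_ge0 HE VZ hQz).

Lemma wp_largest : largest (sat_tot E ^~ Q) (wp E Q).
Proof. exact: epsilon_spec (largest_exists sat_tot_kerP tot_kernel). Qed.

Lemma wlp_largest : largest (sat_par E ^~ Q) (wlp E Q).
Proof. exact: epsilon_spec (largest_exists sat_par_kerP par_kernel). Qed.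

Lemma wp_rangeP v : app (wp E Q) v = v <-> tot_defect E (EO Z Q) (outer v v) = 0.
Proof. exact: (largest_rangeP (sat := sat_tot E ^~ Q) sat_tot_kerP tot_kernel wp_largest). Qed.

Lemma wlp_rangeP v : app (wlp E Q) v = v <-> par_defect E (EO Z Q) (outer v v) = 0.
Proof. exact: (largest_rangeP (sat := sat_par E ^~ Q) sat_par_kerP par_kernel wlp_largest). Qed.

End Postcondition.

Lemma sp_smallest (W : {fset nat}) (P : op R W) : projector P ->
  smallest (sat_par E P) (sp E P).
Proof.
move=> hP; set Z := V `|` W.
have eZ : V `|` W `|` Z = Z by rewrite /Z; fset_eq_tac.
pose ann w := forall v, app (EO Z P) v = v -> app (extS E (outer v v)) w = (fun _ => 0).
have [K [hK HK]] : exists K, projector K /\ (forall w, app K w = w <-> ann w).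
  apply: projector_onto => [v _|k u w hu hw v hv]; first exact: app0.
  by rewrite app_lin (hu _ hv) (hw _ hv); apply: functional_extensionality => a; ring.
apply: epsilon_spec; exists (complop K); split; first exact: projector_complop.
split.
  by apply/(sat_par_complP eZ hP (projector_complop hK)) => w; rewrite extO_full complopK => /HK.
move=> R' hR' /(sat_par_complP eZ hP hR'); rewrite extO_full => H.
apply/(sqle_sameP (projector_complop hK) hR').
by apply: complop_range_sub hK hR' _ => w /H /HK.
Qed.

End Transformers.

Section TransformerLaws.
Variable R : realType.
Variable V : {fset nat}.
Variable E : superop R V.
Hypothesis HE : DProg E.
Variable W : {fset nat}.

Lemma sp_wlp_sqle (Q : op R W) : projector Q -> sqle (sp E (wlp E Q)) Q.
Proof.
move=> hQ; have [hw [sw _]] := wlp_largest HE hQ.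
have [_ [_ min]] := sp_smallest HE hw.
apply: sqle_extOr; first by fsubset_tac.
apply: min; first by apply: projector_extO hQ; fsubset_tac.
by apply: sat_par_extOr sw; fsubset_tac.
Qed.

Lemma sqle_wlp_sp (P : op R W) : projector P -> sqle P (wlp E (sp E P)).
Proof.
move=> hP; have [hs [ss _]] := sp_smallest HE hP.
have [_ [_ max]] := wlp_largest HE hs.
apply: sqle_extOl; first by fsubset_tac.
apply: max; first by apply: projector_extO hP; fsubset_tac.
by apply: sat_par_extOl ss; fsubset_tac.
Qed.

Lemma wp_range_meet (Q : op R W) : projector Q -> forall v,
  app (wp E Q) v = v <-> app (wlp E Q) v = v /\ app (wp E (@idop R W)) v = v.
Proof.
move=> hQ v.
rewrite (wp_rangeP HE hQ) (wlp_rangeP HE hQ) (wp_rangeP HE (@projector_idop R W)).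
rewrite extO_idop; last by fsubset_tac.
apply: (tot_defect_eq0P HE); [fsubset_tac | apply: projector_extO hQ; fsubset_tac | exact: psd_outer].
Qed.

Lemma sp_wp_sqle (Q : op R W) : projector Q -> sqle (sp E (wp E Q)) Q.
Proof.
move=> hQ; have [hw [sw _]] := wp_largest HE hQ.
have [_ [_ min]] := sp_smallest HE hw.
apply: sqle_extOr; first by fsubset_tac.
apply: min; first by apply: projector_extO hQ; fsubset_tac.
by apply: sat_par_extOr (sat_tot_sat_par HE sw); fsubset_tac.
Qed.

(* On [Z2 = V u (V u W)] a vector in the range of [P] has zero partial defect for
   [sp.E.P] and, lying in [wp.E.I], loses no trace; hence its total defect vanishes. *)
Lemma sqle_wp_sp (P : op R W) : projector P ->
  sqle P (wp E (@idop R W)) -> sqle P (wp E (sp E P)).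
Proof.
move=> hP; set Z := V `|` W; set Z2 := V `|` Z.
have [eWZ eWZ2 eP eI] :
    [/\ W `|` Z = Z2, W `|` Z2 = Z2, V `|` W `|` Z = Z2 & V `|` Z `|` W = Z2].
  by rewrite /Z2 /Z; split; fset_eq_tac.
have [VZ2 WZ2 ZZ2] : [/\ V `<=` Z2, W `<=` Z2 & Z `<=` Z2].
  by rewrite /Z2 /Z; split; fsubset_tac.
have [hs [ss _]] := sp_smallest HE hP.
have [hI [sI _]] := wp_largest HE (@projector_idop R W).
have [hws _] := wp_largest HE hs.
have hPz := projector_extO WZ2 hP; have hIz := projector_extO ZZ2 hI.
rewrite (sqle_onP _ _ eWZ) (sqle_onP _ _ eWZ2) extO_full => HPI v.
rewrite !inrange_projP // => hv.
have hvI : app (EO Z2 (wp E (@idop R W))) v = v.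
  by apply/(inrange_projP _ hIz)/HPI/(inrange_projP _ hPz).
apply/(wp_rangeP HE hs)/(tot_defect_eq0P HE VZ2 (projector_extO ZZ2 hs) (psd_outer v)).
split; first exact: (proj1 (sat_parP HE eP hP hs) ss v hv).
by have := proj1 (sat_totP HE eI hI (@projector_idop R W)) sI v hvI; rewrite extO_idop.
Qed.

End TransformerLaws.

Theorem theorem4p9 (R : realType) (V W : {fset nat}) (E : superop R V)
  (HE : DProg E) (P Q : op R W) (HP : projector P) (HQ : projector Q) :
  (* (1) *)
  (sqle (sp E (wlp E Q)) Q /\ sqle P (wlp E (sp E P))) /\
  (* (2): wp.E.Q = wlp.E.Q /\ wp.E.I_W, as subspaces of H_{V u W} *)
  (forall v : basis (V `|` W)%fset -> R[i],
     inrange (wp E Q) v <-> (inrange (wlp E Q) v /\ inrange (wp E (@idop R W)) v)) /\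
  (* (3) *)
  (sqle (sp E (wp E Q)) Q /\
   (sqle P (wp E (@idop R W)) -> sqle P (wp E (sp E P)))).
Proof.
have [hwp _] := wp_largest HE HQ.
have [hwlp _] := wlp_largest HE HQ.
have [hwpI _] := wp_largest HE (@projector_idop R W).
split; first by split; [exact: sp_wlp_sqle | exact: sqle_wlp_sp].
split; last by split; [exact: sp_wp_sqle | exact: sqle_wp_sp].
by move=> v; rewrite !inrange_projP //; exact: wp_range_meet.
Qed.
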